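(* Let $r,s,N$ be integers with $N\ge 1$, let $F=\{(x,y)\in\mathbb{Z}^2: x\ge r,\ y\le s+N,\ x-y\le r-s\}$ and $D=\{(x,y)\in\mathbb{Z}^2: r-s-N\le x-y\le r-s\}$. Let $t$ be a partial $\mathrm{SL}_2$-tiling defined on $F$ such that $t_{xy}=1$ for all $(x,y)\in F$ with $x-y=r-s$, and $t_{r,s+N}=1$. Then there is a friese defined on $D$ which agrees with $t$ on $F$.
   Context: A partial $\mathrm{SL}_2$-tiling defined on $E\subseteq\mathbb{Z}^2$ is a map $t:E\to\{1,2,3,\dots\}$ such that $t_{xy}t_{x+1,y+1}-t_{x,y+1}t_{x+1,y}=1$ whenever all four points $(x,y),(x,y+1),(x+1,y),(x+1,y+1)$ lie in $E$. For integers $c<c'$, a friese on the diagonal band $D=\{(x,y)\in\mathbb{Z}^2: c\le x-y\le c'\}$ is a partial $\mathrm{SL}_2$-tiling defined on $D$ with $t_{xy}=1$ whenever $x-y=c$ or $x-y=c'$. *)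

From Stdlib Require Import ZArith.
Open Scope Z_scope.

Definition region := Z -> Z -> Prop.

(* A partial SL_2-tiling defined on E: values on E are positive integers
   (values outside E are irrelevant), and every unit square contained in E
   has determinant 1. *)
Definition partial_SL2_tiling (E : region) (t : Z -> Z -> Z) : Prop :=
  (forall x y, E x y -> 1 <= t x y) /\
  (forall x y, E x y -> E x (y + 1) -> E (x + 1) y -> E (x + 1) (y + 1) ->
     t x y * t (x + 1) (y + 1) - t x (y + 1) * t (x + 1) y = 1).

Definition band (c c' : Z) : region := fun x y => c <= x - y <= c'.

Definition friese (c c' : Z) (t : Z -> Z -> Z) : Prop :=
  partial_SL2_tiling (band c c') t /\
  (forall x y, x - y = c -> t x y = 1) /\
  (forall x y, x - y = c' -> t x y = 1).

Definition regionF (r s N : Z) : region :=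
  fun x y => r <= x /\ y <= s + N /\ x - y <= r - s.

From Stdlib Require Import ZArith Lia.
Open Scope Z_scope.

(* After a translation we may take r = 0 and s = -N: the tiling t is given on
   the triangle T = { x >= 0, y <= 0, x - y <= N }, equals 1 on its hypotenuse
   x - y = N and at its apex (0, 0), and we want a friese on the band
   0 <= x - y <= N.  A friese of width N is invariant under the glide
   reflection (x, y) |-> (y + N + 1, x + 1), and T meets every orbit of this
   glide on the band, so there is exactly one candidate: fold the band onto T
   by the glide and read off t.  Positivity and the boundary values of this
   extension are inherited from T by glide invariance.  For the unit squares
   it suffices, by glide invariance of the determinant, to treat those with
   lower-left corner in the quadrant x >= 0 >= y: they lie in T except for the
   squares on the row y = 0, whose upper corners fold back onto the column
   x = 0.  Their determinant is 1 by an identity inside T which comes from the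
   classical fact that in an SL_2-tiling the sum of the two neighbouring rows
   of a row is proportional to it. *)

Definition sq_det (f : Z -> Z -> Z) (x y : Z) : Z :=
  f x y * f (x + 1) (y + 1) - f x (y + 1) * f (x + 1) y.

Lemma Z_induction_from (a : Z) (P : Z -> Prop) :
  P a -> (forall n, a <= n -> P n -> P (n + 1)) -> forall n, a <= n -> P n.
Proof.
  intros Ha Hstep n Hn.
  replace n with (a + Z.of_nat (Z.to_nat (n - a))) by lia.
  induction (Z.to_nat (n - a)) as [|k IH].
  - now rewrite Z.add_0_r.
  - rewrite Nat2Z.inj_succ, Z.add_succ_r. apply Hstep; [lia | exact IH].
Qed.

Lemma proportional_sequences (w b : Z -> Z) (x0 x1 : Z) :
  (forall x, x0 <= x < x1 -> w x * b (x + 1) = w (x + 1) * b x) ->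
  (forall x, x0 <= x <= x1 -> b x <> 0) ->
  forall x, x0 <= x <= x1 -> b x0 * w x = b x * w x0.
Proof.
  intros Hstep Hb x [Hx0 Hx1]. revert x Hx0 Hx1.
  refine (Z_induction_from _ _ _ _); [intros; ring |].
  intros x Hx IH Hx1.
  apply (Z.mul_reg_l _ _ (b x)); [apply Hb; lia |].
  transitivity (b x0 * (w x * b (x + 1))).
  { rewrite (Hstep x) by lia. ring. }
  transitivity (b x0 * w x * b (x + 1)); [ring |].
  rewrite IH by lia. ring.
Qed.

Lemma stacked_squares (f : Z -> Z -> Z) (x y : Z) :
  sq_det f x (y - 1) = 1 -> sq_det f x y = 1 ->
  (f x (y - 1) + f x (y + 1)) * f (x + 1) y
  = (f (x + 1) (y - 1) + f (x + 1) (y + 1)) * f x y.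
Proof.
  unfold sq_det. replace (y - 1 + 1) with y by ring. lia.
Qed.

Lemma tiling_restrict (E E' : region) (t : Z -> Z -> Z) :
  (forall x y, E' x y -> E x y) ->
  partial_SL2_tiling E t -> partial_SL2_tiling E' t.
Proof.
  intros Hsub [Hpos Hdet]. split.
  - intros x y H. apply Hpos, Hsub, H.
  - intros x y H1 H2 H3 H4. apply Hdet; apply Hsub; assumption.
Qed.

Lemma tiling_translate (E : region) (t : Z -> Z -> Z) (a b : Z) :
  partial_SL2_tiling E t ->
  partial_SL2_tiling (fun x y => E (x + a) (y + b))
                     (fun x y => t (x + a) (y + b)).
Proof.
  intros [Hpos Hdet]. split.
  - intros x y H. apply Hpos, H.
  - intros x y H1 H2 H3 H4.
    replace (x + 1 + a) with (x + a + 1) in * by ring.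
    replace (y + 1 + b) with (y + b + 1) in * by ring.
    apply Hdet; assumption.
Qed.

Lemma friese_translate (c c' d d' a b : Z) (f : Z -> Z -> Z) :
  d = c - a + b -> d' = c' - a + b -> friese c c' f ->
  friese d d' (fun x y => f (x + a) (y + b)).
Proof.
  intros -> -> [Htiling [Hlow Hhigh]]. split; [| split].
  - apply (tiling_restrict (fun x y => band c c' (x + a) (y + b))).
    + unfold band. intros. lia.
    + now apply tiling_translate.
  - intros x y H. apply Hlow. lia.
  - intros x y H. apply Hhigh. lia.
Qed.

(* The glide reflection (x, y) |-> (y + N + 1, x + 1) preserves the band
   0 <= x - y <= N, and each of its orbits there meets the quadrant
   x >= 0 >= y. *)
Lemma glide_reduction (N : Z) (P : Z -> Z -> Prop) :
  (forall x y, 0 <= x - y <= N -> P x y <-> P (y + N + 1) (x + 1)) ->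
  (forall x y, 0 <= x -> y <= 0 -> x - y <= N -> P x y) ->
  forall x y, 0 <= x - y <= N -> P x y.
Proof.
  intros Hglide Hquadrant.
  (* Below the x-axis the glide increases x while keeping y <= 0. *)
  assert (Hlow : forall n, 0 <= n ->
            forall x y, 0 <= x - y <= N -> y <= 0 -> - n <= x -> P x y).
  { refine (Z_induction_from _ _ _ _).
    - intros x y Hd Hy Hx. apply Hquadrant; lia.
    - intros n Hn IH x y Hd Hy Hx.
      destruct (Z_le_gt_dec (- n) x); [now apply IH |].
      apply Hglide; [lia |]. apply IH; lia. }
  (* Above the x-axis the inverse glide decreases y while keeping x >= 0. *)
  assert (Hall : forall n, 0 <= n ->
            forall x y, 0 <= x - y <= N -> y <= n -> P x y).
  { refine (Z_induction_from _ _ _ _).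
    - intros x y Hd Hy. apply (Hlow (Z.abs x)); lia.
    - intros n Hn IH x y Hd Hy.
      destruct (Z_le_gt_dec y n); [now apply IH |].
      specialize (Hglide (y - 1) (x - N - 1) ltac:(lia)).
      replace (x - N - 1 + N + 1) with x in Hglide by ring.
      replace (y - 1 + 1) with y in Hglide by ring.
      apply Hglide, IH; lia. }
  intros x y Hd. apply (Hall (Z.abs y)); lia.
Qed.

Section Triangle.

Variables (N : Z) (t : Z -> Z -> Z).
Hypothesis N_pos : 1 <= N.
Hypothesis t_pos : forall x y, 0 <= x -> y <= 0 -> x - y <= N -> 1 <= t x y.
Hypothesis t_det :
  forall x y, 0 <= x -> y <= -1 -> x - y <= N - 1 -> sq_det t x y = 1.
Hypothesis t_top : forall x y, 0 <= x -> y <= 0 -> x - y = N -> t x y = 1.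
Hypothesis t_apex : t 0 0 = 1.

Lemma row_recurrence (y x : Z) :
  - N + 1 <= y <= -1 -> 0 <= x <= y + N - 1 ->
  t 0 y * (t x (y - 1) + t x (y + 1)) = t x y * (t 0 (y - 1) + t 0 (y + 1)).
Proof.
  intros Hy Hx.
  apply (proportional_sequences (fun x => t x (y - 1) + t x (y + 1))
           (fun x => t x y) 0 (y + N - 1)); [| | lia].
  - intros x' Hx'. apply stacked_squares; apply t_det; lia.
  - intros x' Hx'. pose proof (t_pos x' y). lia.
Qed.

(* The row recurrence one column further, at the point (y + N, y) of the
   hypotenuse, where row y - 1 has left the triangle. *)
Lemma edge_recurrence (y : Z) :
  - N + 1 <= y <= -1 ->
  t 0 y * t (y + N) (y + 1) = t 0 (y - 1) + t 0 (y + 1).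
Proof.
  intros Hy.
  pose proof (row_recurrence y (y + N - 1) Hy ltac:(lia)) as Hrow.
  pose proof (t_det (y + N - 1) y ltac:(lia) ltac:(lia) ltac:(lia)) as Hdet.
  pose proof (t_pos (y + N - 1) y ltac:(lia) ltac:(lia) ltac:(lia)) as Hpos.
  unfold sq_det in Hdet.
  replace (y + N - 1 + 1) with (y + N) in Hdet by ring.
  rewrite (t_top (y + N - 1) (y - 1)) in Hrow by lia.
  rewrite (t_top (y + N) y) in Hdet by lia.
  apply (Z.mul_reg_l _ _ (t (y + N - 1) y)); [lia |].
  replace (t (y + N - 1) (y + 1))
    with (t (y + N - 1) y * t (y + N) (y + 1) - 1) in Hrow by lia.
  lia.
Qed.

(* The 2x2 minor on the columns 0 and x and two consecutive rows does not
   depend on the rows; its value is read off at the hypotenuse. *)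
Lemma column_minor (x y : Z) :
  1 <= x <= N - 1 -> x - N <= y <= -1 ->
  t 0 y * t x (y + 1) - t x y * t 0 (y + 1) = t 0 (x - N - 1).
Proof.
  intros Hx [Hy0 Hy1]. revert y Hy0 Hy1.
  refine (Z_induction_from _ _ _ _).
  - intros _.
    pose proof (edge_recurrence (x - N) ltac:(lia)) as Hedge.
    replace (x - N + N) with x in Hedge by ring.
    replace (x - N - 1 + 1) with (x - N) in * by ring.
    rewrite (t_top x (x - N)) by lia.
    lia.
  - intros y Hy IH Hy1.
    pose proof (row_recurrence (y + 1) x ltac:(lia) ltac:(lia)) as Hrow.
    replace (y + 1 - 1) with y in Hrow by ring.
    replace (y + 1 + 1) with (y + 2) in * by ring.
    rewrite <- IH by lia.
    lia.
Qed.

(* The identity which makes the squares on the row y = 0 unimodular once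
   their upper corners are folded back onto the column x = 0. *)
Lemma folded_square (x : Z) :
  1 <= x <= N - 1 ->
  t x 0 * t 0 (x - N) - t 0 (x - N - 1) * t (x + 1) 0 = 1.
Proof.
  intros Hx.
  pose proof (column_minor x (-1) Hx ltac:(lia)) as Hx_minor.
  replace (-1 + 1) with 0 in Hx_minor by ring. rewrite t_apex in Hx_minor.
  rewrite <- Hx_minor.
  destruct (Z.eq_dec x (N - 1)) as [Hlast | Hinner].
  - (* the column x + 1 = N ends at the hypotenuse *)
    replace (x - N) with (-1) by lia.
    rewrite (t_top (x + 1) 0), (t_top x (-1)) by lia.
    lia.
  - pose proof (t_det x (-1) ltac:(lia) ltac:(lia) ltac:(lia)) as Hdet.
    unfold sq_det in Hdet. replace (-1 + 1) with 0 in Hdet by ring.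
    pose proof (column_minor (x + 1) (-1) ltac:(lia) ltac:(lia)) as Hnext.
    replace (x + 1 - N - 1) with (x - N) in Hnext by ring.
    replace (-1 + 1) with 0 in Hnext by ring.
    rewrite t_apex in Hnext. rewrite <- Hnext.
    lia.
Qed.

(* The extension of t to the band 0 <= x - y <= N: translate (x, y) by a
   multiple of (N + 2, N + 2), i.e. by a power of the square of the glide,
   so that y lands in ]-(N + 2), 0]; the point is then either in the
   triangle, or is sent into it by one more glide. *)
Definition extension (x y : Z) : Z :=
  let k := (- y) / (N + 2) in
  let x0 := x + (N + 2) * k in
  let y0 := y + (N + 2) * k in
  if Z_le_dec 0 x0 then t x0 y0 else t (y0 + N + 1) (x0 + 1).

Lemma translation_index (y k : Z) :
  y + (N + 2) * k <= 0 -> - (N + 2) < y + (N + 2) * k -> (- y) / (N + 2) = k.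
Proof.
  intros Hle Hgt. symmetry.
  apply (Z.div_unique _ _ _ (- y - (N + 2) * k)); lia.
Qed.

Lemma extension_translate (x y k : Z) :
  0 <= x + (N + 2) * k -> y + (N + 2) * k <= 0 -> x - y <= N ->
  extension x y = t (x + (N + 2) * k) (y + (N + 2) * k).
Proof.
  intros Hx Hy Hd. unfold extension. cbv zeta.
  rewrite (translation_index y k) by lia.
  destruct Z_le_dec; [reflexivity | lia].
Qed.

Lemma extension_translate_glide (x y k : Z) :
  x + (N + 2) * k <= -1 -> - N - 1 <= y + (N + 2) * k -> y <= x ->
  extension x y = t (y + (N + 2) * k + N + 1) (x + (N + 2) * k + 1).
Proof.
  intros Hx Hy Hd. unfold extension. cbv zeta.
  rewrite (translation_index y k) by lia.
  destruct Z_le_dec; [lia | reflexivity].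
Qed.

Lemma extension_on_triangle (x y : Z) :
  0 <= x -> y <= 0 -> x - y <= N -> extension x y = t x y.
Proof.
  intros Hx Hy Hd. rewrite (extension_translate x y 0) by lia.
  f_equal; ring.
Qed.

Lemma extension_glide (x y : Z) :
  0 <= x - y <= N -> extension x y = extension (y + N + 1) (x + 1).
Proof.
  intros Hd.
  set (k := (- y) / (N + 2)).
  assert (Hk_le : (N + 2) * k <= - y) by (apply Z.mul_div_le; lia).
  assert (Hk_gt : - y < (N + 2) * (k + 1)) by (apply Z.mul_succ_div_gt; lia).
  destruct (Z_le_gt_dec 0 (x + (N + 2) * k)).
  - rewrite (extension_translate x y k),
            (extension_translate_glide (y + N + 1) (x + 1) (k - 1)) by lia.
    f_equal; ring.
  - rewrite (extension_translate_glide x y k),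
            (extension_translate (y + N + 1) (x + 1) k) by lia.
    f_equal; ring.
Qed.

(* The glide maps unit squares of the band to unit squares (transposing
   two corners), so it preserves their determinants. *)
Lemma sq_det_extension_glide (x y : Z) :
  1 <= x - y <= N - 1 ->
  sq_det extension x y = sq_det extension (y + N + 1) (x + 1).
Proof.
  intros Hd. unfold sq_det.
  rewrite (extension_glide x y), (extension_glide (x + 1) (y + 1)),
          (extension_glide x (y + 1)), (extension_glide (x + 1) y) by lia.
  replace (y + 1 + N + 1) with (y + N + 1 + 1) by ring.
  ring.
Qed.

Lemma extension_pos (x y : Z) : 0 <= x - y <= N -> 1 <= extension x y.
Proof.
  apply (glide_reduction N (fun x y => 1 <= extension x y)).
  - intros x' y' Hd. now rewrite (extension_glide x' y' Hd).
  - intros x' y' Hx Hy Hd. rewrite extension_on_triangle by lia.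
    now apply t_pos.
Qed.

Lemma extension_boundary (x y : Z) :
  0 <= x - y <= N -> x - y = 0 \/ x - y = N -> extension x y = 1.
Proof.
  revert x y.
  apply (glide_reduction N
           (fun x y => x - y = 0 \/ x - y = N -> extension x y = 1)).
  - intros x y Hd. rewrite (extension_glide x y Hd).
    split; intros H Hb; apply H; lia.
  - intros x y Hx Hy Hd Hb. rewrite extension_on_triangle by lia.
    destruct Hb as [Hdiag | Htop].
    + replace x with 0 by lia. replace y with 0 by lia. exact t_apex.
    + now apply t_top.
Qed.

Lemma sq_det_extension_quadrant (x y : Z) :
  0 <= x -> y <= 0 -> 1 <= x - y <= N - 1 -> sq_det extension x y = 1.
Proof.
  intros Hx Hy Hd.
  destruct (Z.eq_dec y 0) as [-> | Hy'].
  - (* the upper corners fold back onto the column x = 0 *)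
    assert (Hfold : forall x', 1 <= x' <= N ->
              extension x' 1 = t 0 (x' - N - 1)).
    { intros x' Hx'.
      rewrite <- (extension_on_triangle 0 (x' - N - 1)) by lia.
      rewrite (extension_glide 0 (x' - N - 1)) by lia.
      f_equal; ring. }
    unfold sq_det. replace (0 + 1) with 1 by ring.
    rewrite (Hfold x), (Hfold (x + 1)), !extension_on_triangle by lia.
    replace (x + 1 - N - 1) with (x - N) by ring.
    apply folded_square. lia.
  - unfold sq_det. rewrite !extension_on_triangle by lia.
    apply t_det; lia.
Qed.

Lemma sq_det_extension (x y : Z) :
  1 <= x - y <= N - 1 -> sq_det extension x y = 1.
Proof.
  intros Hd.
  apply (glide_reduction N
    (fun x y => 1 <= x - y <= N - 1 -> sq_det extension x y = 1));
    [| | lia | exact Hd].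
  - intros x' y' Hd'.
    split; intros H Hsq.
    + rewrite <- sq_det_extension_glide by lia. apply H. lia.
    + rewrite sq_det_extension_glide by lia. apply H. lia.
  - intros x' y' Hx Hy _ Hsq. now apply sq_det_extension_quadrant.
Qed.

Lemma extension_friese : friese 0 N extension.
Proof.
  unfold friese, partial_SL2_tiling, band. split; [split | split].
  - intros x y Hd. now apply extension_pos.
  - intros x y H1 H2 H3 H4. apply sq_det_extension. lia.
  - intros x y Hd. apply extension_boundary; lia.
  - intros x y Hd. apply extension_boundary; lia.
Qed.

End Triangle.

Theorem triangle_extends_to_friese (N : Z) (t : Z -> Z -> Z) :
  1 <= N ->
  partial_SL2_tiling (regionF 0 (- N) N) t ->
  (forall x y, regionF 0 (- N) N x y -> x - y = N -> t x y = 1) ->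
  t 0 0 = 1 ->
  exists t' : Z -> Z -> Z,
    friese 0 N t' /\ (forall x y, regionF 0 (- N) N x y -> t' x y = t x y).
Proof.
  unfold regionF. intros HN [Hpos Hdet] Htop Hapex.
  assert (t_pos : forall x y, 0 <= x -> y <= 0 -> x - y <= N -> 1 <= t x y)
    by (intros; apply Hpos; lia).
  assert (t_det : forall x y, 0 <= x -> y <= -1 -> x - y <= N - 1 ->
            sq_det t x y = 1)
    by (intros; apply Hdet; lia).
  assert (t_top : forall x y, 0 <= x -> y <= 0 -> x - y = N -> t x y = 1)
    by (intros; apply Htop; lia).
  exists (extension N t). split.
  - exact (extension_friese N t HN t_pos t_det t_top Hapex).
  - intros x y H. apply extension_on_triangle; lia.
Qed.

Theorem lemma7p1 (r s N : Z) (t : Z -> Z -> Z) :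
  1 <= N ->
  partial_SL2_tiling (regionF r s N) t ->
  (forall x y, regionF r s N x y -> x - y = r - s -> t x y = 1) ->
  t r (s + N) = 1 ->
  exists t' : Z -> Z -> Z,
    friese (r - s - N) (r - s) t' /\
    (forall x y, regionF r s N x y -> t' x y = t x y).
Proof.
  intros HN Htiling Htop Hapex.
  destruct (triangle_extends_to_friese N (fun x y => t (x + r) (y + (s + N))))
    as [f [Hfriese Hagree]].
  - exact HN.
  - apply (tiling_restrict (fun x y => regionF r s N (x + r) (y + (s + N)))).
    + unfold regionF. intros. lia.
    + now apply tiling_translate.
  - intros x y H Hd. apply Htop; unfold regionF in *; lia.
  - now rewrite !Z.add_0_l.
  - exists (fun x y => f (x + - r) (y + - (s + N))). split.
    + apply (friese_translate 0 N); [lia | lia | exact Hfriese].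
    + intros x y H. rewrite Hagree by (unfold regionF in *; lia).
      f_equal; ring.
Qed.
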